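(* Let $\overline{\mathscr{B}}\subset\mathcal{P}^{n-1}_r$ be a Borel set of monomials of degree $r$ in the variables $x_1,\ldots,x_n$, and let $\overline{\mathscr{N}}$ be its complement in $\mathcal{P}^{n-1}_r$. Let $\mathscr{N}\subset\mathcal{P}^n_r$ be the set of all monomials of degree $r$ in $x_0,\ldots,x_n$ that can be obtained from some element of $\overline{\mathscr{N}}$ by applying a finite (possibly empty) sequence of decreasing elementary moves. Then $$\mathscr{N}=\mathcal{P}^n_r\setminus\Big\{\big(\langle\overline{\mathscr{B}}\rangle^{\mathrm{sat}}\cdot\mathbb{K}[x_0,\ldots,x_n]\big)_r\Big\},$$ where $\langle\overline{\mathscr{B}}\rangle^{\mathrm{sat}}$ is the saturation of the ideal generated by $\overline{\mathscr{B}}$ in $\mathbb{K}[x_1,\ldots,x_n]$ and $\{(\cdot)_r\}$ denotes the set of monomials of degree $r$ in an ideal.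
   Context: Variables are ordered $x_n>\cdots>x_0$. $\mathcal{P}^n_r$ is the set of monomials of degree $r$ in $x_0,\ldots,x_n$, and $\mathcal{P}^{n-1}_r$ is identified with the set of monomials of degree $r$ in $x_1,\ldots,x_n$. A decreasing elementary move on a monomial $x^\alpha$ is the multiplication by $\frac{x_{j-1}}{x_j}$ for some $j\geq1$ with $x_j\mid x^\alpha$; an increasing elementary move is multiplication by $\frac{x_{i+1}}{x_i}$ with $x_i\mid x^\alpha$. A Borel set is a set of monomials of a fixed degree closed under increasing elementary moves. Saturation in $\mathbb{K}[x_1,\ldots,x_n]$ is with respect to the ideal $(x_1,\ldots,x_n)$. *)

From HB Require Import structures.
From mathcomp Require Import all_boot all_order all_algebra.
From Stdlib Require Import Relations.
From Stdlib Require List.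
Set Implicit Arguments. Unset Strict Implicit. Unset Printing Implicit Defensive.
Import GRing.Theory.
Local Open Scope ring_scope.

(* Exponent vectors of monomials in the variables x_0,...,x_n
   (index i : 'I_n.+1 stands for the variable x_i). *)
Definition mon (n : nat) := {ffun 'I_n.+1 -> nat}.

Definition mdeg n (a : mon n) : nat := (\sum_(i < n.+1) a i)%N.

Definition no_x0 n (a : mon n) : Prop := a ord0 = 0%N.

(* P^n_r and (the identification of) P^{n-1}_r *)
Definition inPn n r (a : mon n) : Prop := mdeg a = r.
Definition inPn1 n r (a : mon n) : Prop := mdeg a = r /\ no_x0 a.

Definition mmul n (a b : mon n) : mon n := [ffun k => (a k + b k)%N].

(* decreasing elementary move: multiply by x_{j-1}/x_j, j >= 1, x_j | x^a *)
Definition dec_move n (a b : mon n) : Prop :=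
  exists i j : 'I_n.+1, nat_of_ord j = (nat_of_ord i).+1 /\ (0 < a j)%N /\
    b = [ffun k => (a k + (k == i) - (k == j))%N].

(* increasing elementary move: multiply by x_{i+1}/x_i with x_i | x^a *)
Definition inc_move n (a b : mon n) : Prop :=
  exists i j : 'I_n.+1, nat_of_ord j = (nat_of_ord i).+1 /\ (0 < a i)%N /\
    b = [ffun k => (a k + (k == j) - (k == i))%N].

Definition borel n r (B : mon n -> Prop) : Prop :=
  (forall a, B a -> inPn1 r a) /\ (forall a b, B a -> inc_move a b -> B b).

(* A polynomial is represented by a finite formal sum of terms (c, x^a);
   two representations are equal as polynomials iff they have the same
   coefficient function. *)
Definition mpoly (K : fieldType) n := seq (K * mon n)%type.

Definition coef (K : fieldType) n (p : mpoly K n) (a : mon n) : K :=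
  \sum_(c <- p | c.2 == a) c.1.

Definition peq (K : fieldType) n (p q : mpoly K n) : Prop :=
  forall a, coef p a = coef q a.

Definition pmul (K : fieldType) n (p q : mpoly K n) : mpoly K n :=
  [seq (c.1 * d.1, mmul c.2 d.2) | c <- p, d <- q].

Definition monp (K : fieldType) n (a : mon n) : mpoly K n := [:: (1, a)].
Arguments monp K {n} a.

(* p belongs to the subring K[x_1,...,x_n] *)
Definition in_sub (K : fieldType) n (p : mpoly K n) : Prop :=
  forall a, coef p a != 0 -> no_x0 a.

Definition in_all (K : fieldType) n (p : mpoly K n) : Prop := True.

Definition lin_comb (K : fieldType) n (hs : seq (mpoly K n * mpoly K n)%type) : mpoly K n :=
  flatten [seq pmul h.1 h.2 | h <- hs].

(* ideal generated by the set S of polynomials inside the ring R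
   (R = K[x_1..x_n] via in_sub, or K[x_0..x_n] via in_all) *)
Definition gen_ideal (K : fieldType) n (R : mpoly K n -> Prop)
    (S : mpoly K n -> Prop) (f : mpoly K n) : Prop :=
  R f /\ exists hs : seq (mpoly K n * mpoly K n)%type,
    List.Forall (fun h => R h.1 /\ S h.2) hs /\ peq f (lin_comb hs).

Definition mon_ideal (K : fieldType) n (B : mon n -> Prop) : mpoly K n -> Prop :=
  gen_ideal (@in_sub K n) (fun g => exists b, B b /\ g = monp K b).

Arguments mon_ideal K {n} B.

(* (x_1,...,x_n)^k in K[x_1..x_n], generated by the degree k monomials *)
Definition irr_pow (K : fieldType) n (k : nat) : mpoly K n -> Prop :=
  gen_ideal (@in_sub K n)
    (fun g => exists u : mon n, mdeg u = k /\ no_x0 u /\ g = monp K u).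

Arguments irr_pow K {n} k.

Definition saturation (K : fieldType) n (I : mpoly K n -> Prop) (f : mpoly K n) : Prop :=
  in_sub f /\ exists k, forall g, irr_pow K k g -> I (pmul f g).

Definition ext_ideal (K : fieldType) n (J : mpoly K n -> Prop) : mpoly K n -> Prop :=
  gen_ideal (@in_all K n) J.

From mathcomp Require Import all_boot all_order all_algebra.
From Stdlib Require Import Relations.
From mathcomp Require Import zify.
Set Implicit Arguments. Unset Strict Implicit. Unset Printing Implicit Defensive.
Import GRing.Theory.

(* Lemma 4.1.  Both sides of the equivalence are governed by one combinatorial
   condition on a degree-r monomial x^a of K[x_0,...,x_n]:

     tail_covered a :  some b in Bbar satisfies b_k <= a_k for every k >= 2,

   i.e. x^a is divisible by x^b once the variables x_0 and x_1 are ignored.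

   - Algebra: x^a lies in <Bbar>^sat . K[x_0,...,x_n] iff a is tail-covered.
     If b is in Bbar, Borel-ness makes x^b / x_1^(b_1) times any monomial of
     degree b_1 in x_1..x_n an element of Bbar, so this "tail" of x^b is in the
     saturation; conversely, multiplying a saturated element by x_1^k and
     reading off a nonzero coefficient exhibits the required generator b.
   - Combinatorics: among degree-r monomials in x_1..x_n, being tail-covered is
     the same as being in Bbar (borel_tail_closed); tail-coveredness propagates
     backwards along decreasing moves; and every monomial is reached by
     decreasing moves x_1 -> x_0 from a monomial without x_0 with the same tail. *)

Section Monomials.
Variable n : nat.

Definition mle (m a : mon n) : bool := [forall k, (m k <= a k)%N].
Definition msub (a m : mon n) : mon n := [ffun k => (a k - m k)%N].

Lemma mmul_eq m d a : (mmul m d == a) = mle m a && (d == msub a m).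
Proof.
apply/eqP/andP.
- move=> <-; split; first by apply/forallP=> k; rewrite ffunE leq_addr.
  by apply/eqP/ffunP=> k; rewrite !ffunE addKn.
- by case=> /forallP le_ma /eqP ->; apply/ffunP=> k; rewrite !ffunE subnKC.
Qed.

Lemma mmul_msubK c a : mle c a -> mmul (msub a c) c = a.
Proof. by move=> /forallP le_ca; apply/ffunP=> k; rewrite !ffunE subnK. Qed.

Lemma mmul_inj_r u : injective (fun m : mon n => mmul m u).
Proof.
move=> m1 m2 /ffunP eq_m; apply/ffunP=> k; have := eq_m k.
by rewrite !ffunE => /eqP; rewrite eqn_add2r => /eqP.
Qed.

Lemma mdeg_mmul (a b : mon n) : mdeg (mmul a b) = (mdeg a + mdeg b)%N.
Proof. by rewrite /mdeg -big_split; apply: eq_bigr => k _; rewrite ffunE. Qed.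

(* [mv x i j] moves one unit of exponent from x_j to x_i: elementary moves
   are exactly the [mv x i j] with |i - j| = 1 and x_j > 0. *)
Definition mv (x : mon n) (i j : 'I_n.+1) : mon n :=
  [ffun k => x k + (k == i) - (k == j)].

Lemma mv_src (x : mon n) i j : i != j -> mv x i j i = x i + 1.
Proof. by move=> ij; rewrite ffunE eqxx (negbTE ij) subn0. Qed.

Lemma mv_tgt (x : mon n) i j : i != j -> mv x i j j = x j - 1.
Proof. by move=> ij; rewrite ffunE eqxx eq_sym (negbTE ij) addn0. Qed.

Lemma mv_other (x : mon n) i j k : k != i -> k != j -> mv x i j k = x k.
Proof. by move=> ki kj; rewrite ffunE (negbTE ki) (negbTE kj) addn0 subn0. Qed.

Lemma mv_weight (w : 'I_n.+1 -> nat) (x : mon n) i j : i != j -> 0 < x j ->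
  \sum_k w k * mv x i j k + w j = \sum_k w k * x k + w i.
Proof.
move=> ij xj_gt0.
have pick l : \sum_(k < n.+1) w k * (k == l) = w l.
  rewrite (bigD1 l) //= eqxx muln1 big1 ?addn0 // => k /negbTE ->.
  by rewrite muln0.
rewrite -(pick j) -(pick i) -!big_split /=; apply: eq_bigr => k _.
rewrite -!mulnDr; congr (_ * _).
have [->|ki] := eqVneq k i; first by rewrite mv_src // (negbTE ij) /=; lia.
have [->|kj] := eqVneq k j; first by rewrite mv_tgt //=; lia.
by rewrite mv_other.
Qed.

Lemma mdeg_mv (x : mon n) i j : i != j -> 0 < x j -> mdeg (mv x i j) = mdeg x.
Proof.
move=> ij xj_gt0; have := mv_weight (fun _ => 1) ij xj_gt0.
rewrite /mdeg !(eq_bigr _ (fun k _ => mul1n _)).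
by move/eqP; rewrite eqn_add2r => /eqP.
Qed.

End Monomials.

Section Coefficients.
Variables (K : fieldType) (n : nat).
Local Open Scope ring_scope.

Lemma coef_nil a : coef ([::] : mpoly K n) a = 0.
Proof. by rewrite /coef big_nil. Qed.

Lemma coef_cons (x : K * mon n) p a :
  coef (x :: p) a = (if x.2 == a then x.1 else 0) + coef p a.
Proof. by rewrite /coef big_cons; case: ifP; rewrite ?add0r. Qed.

Lemma coef_cat (p q : mpoly K n) a : coef (p ++ q) a = coef p a + coef q a.
Proof. by rewrite /coef big_cat. Qed.

Lemma coef_monp (b a : mon n) : coef (monp K b) a = if b == a then 1 else 0.
Proof. by rewrite coef_cons coef_nil addr0. Qed.

Lemma pmul_cons (c : K * mon n) p q :
  pmul (c :: p) q = [seq (c.1 * d.1, mmul c.2 d.2) | d <- q] ++ pmul p q.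
Proof. by []. Qed.

Lemma coef_scale_shift (c : K * mon n) (q : mpoly K n) a :
  coef [seq (c.1 * d.1, mmul c.2 d.2) | d <- q] a =
  c.1 * (if mle c.2 a then coef q (msub a c.2) else 0).
Proof.
elim: q => [|d q IH]; first by rewrite !coef_nil; case: ifP; rewrite mulr0.
rewrite /= !coef_cons IH /= mmul_eq.
case: (mle c.2 a) => /=; last by rewrite !mulr0 add0r.
by rewrite mulrDr; case: ifP; rewrite ?mulr0.
Qed.

Lemma coef_pmul_nz (p q : mpoly K n) a : coef (pmul p q) a != 0 ->
  exists m, mle m a /\ coef q (msub a m) != 0.
Proof.
elim: p => [|c p IH]; first by rewrite coef_nil eqxx.
rewrite pmul_cons coef_cat coef_scale_shift.
case le_ca: (mle c.2 a); last by rewrite mulr0 add0r.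
have [->|q_nz] := eqVneq (coef q (msub a c.2)) 0; first by rewrite mulr0 add0r.
by move=> _; exists c.2.
Qed.

Lemma pmul_monpl (c : mon n) (q : mpoly K n) :
  pmul (monp K c) q = [seq (1 * d.1, mmul c d.2) | d <- q].
Proof. by rewrite pmul_cons cats0. Qed.

Lemma pmul_monp (c u : mon n) : pmul (monp K c) (monp K u) = monp K (mmul c u).
Proof. by rewrite pmul_monpl /= mul1r. Qed.

Lemma coef_pmul_monpl (c : mon n) (q : mpoly K n) a :
  coef (pmul (monp K c) q) a = if mle c a then coef q (msub a c) else 0.
Proof. by rewrite pmul_monpl (coef_scale_shift (1, c)) mul1r. Qed.

Lemma coef_pmul_monpr (p : mpoly K n) (u m : mon n) :
  coef (pmul p (monp K u)) (mmul m u) = coef p m.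
Proof.
elim: p => [|c p IH]; first by rewrite !coef_nil.
by rewrite pmul_cons /= !coef_cons IH mulr1 (inj_eq (@mmul_inj_r n u)).
Qed.

Lemma coef_lin_comb_nz (hs : seq (mpoly K n * mpoly K n)) a :
  coef (lin_comb hs) a != 0 ->
  exists h, List.In h hs /\ coef (pmul h.1 h.2) a != 0.
Proof.
elim: hs => [|h hs IH]; first by rewrite /lin_comb /= coef_nil eqxx.
rewrite /lin_comb /= coef_cat.
have [->|h_nz] := eqVneq (coef (pmul h.1 h.2) a) 0; last by exists h; split; [left|].
by rewrite add0r => /IH [h' [in_h' nz]]; exists h'; split; [right|].
Qed.

Lemma pmul_monpl_cat (c : mon n) (p q : mpoly K n) :
  pmul (monp K c) (p ++ q) = pmul (monp K c) p ++ pmul (monp K c) q.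
Proof. by rewrite !pmul_monpl map_cat. Qed.

Lemma pmul_monpl_comm (c : mon n) (p q : mpoly K n) :
  pmul (monp K c) (pmul p q) = pmul p (pmul (monp K c) q).
Proof.
elim: p => [|x p IH]; first by rewrite pmul_monpl.
rewrite pmul_cons pmul_monpl_cat IH pmul_cons; congr (_ ++ _).
rewrite !pmul_monpl -!map_comp; apply: eq_map => d /=.
by rewrite !mul1r; congr pair; apply/ffunP=> k; rewrite !ffunE addnCA.
Qed.

Lemma pmul_monpl_lin (c : mon n) (hs : seq (mpoly K n * mpoly K n)) :
  pmul (monp K c) (lin_comb hs) =
  lin_comb [seq (h.1, pmul (monp K c) h.2) | h <- hs].
Proof.
elim: hs => [|h hs IH]; first by rewrite pmul_monpl.
by rewrite /lin_comb /= pmul_monpl_cat -/(lin_comb hs) IH pmul_monpl_comm.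
Qed.

End Coefficients.

Section Ideals.
Variables (K : fieldType) (n : nat).
Local Open Scope ring_scope.

Lemma gen_ideal_support (R S : mpoly K n -> Prop) f a :
  gen_ideal R S f -> coef f a != 0 ->
  exists g m, S g /\ mle m a /\ coef g (msub a m) != 0.
Proof.
case=> _ [hs [gen_hs eq_f]]; rewrite eq_f => /coef_lin_comb_nz [h [in_h nz]].
have [_ S_h] := proj1 (List.Forall_forall _ _) gen_hs h in_h.
by have [m [le_ma nz_m]] := coef_pmul_nz nz; exists h.2, m.
Qed.

Lemma in_sub_monp (u : mon n) : no_x0 u -> in_sub (monp K u).
Proof. by move=> u0 l; rewrite coef_monp; case: (u =P l) => [<-|] //; rewrite eqxx. Qed.

Lemma ext_ideal_monp_multiple (J : mpoly K n -> Prop) c a :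
  J (monp K c) -> mle c a -> ext_ideal J (monp K a).
Proof.
move=> J_c le_ca; split => //.
exists [:: (monp K (msub a c), monp K c)]; split; first by constructor.
by move=> l; rewrite /lin_comb /= mul1r mmul_msubK.
Qed.

End Ideals.

Section Combinatorics.
Variable n : nat.

Definition tail_le (b a : mon n) : Prop := forall k : 'I_n.+1, (2 <= k)%N -> (b k <= a k)%N.

(* Weighted degree that strictly decreases along moves towards x_1. *)
Definition weight (m : mon n) : nat := \sum_(k < n.+1) k.-1 * m k.

Lemma shift_down_tail (b m : mon n) (k : 'I_n.+1) :
  (2 <= k)%N -> (b k < m k)%N -> no_x0 m -> tail_le b m ->
  exists m', [/\ no_x0 m', mdeg m' = mdeg m, tail_le b m',
                 (weight m' < weight m)%N & inc_move m' m].
Proof.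
move=> k_ge2 lt_bm m0 le_bm.
have k1_lt : (k.-1 < n.+1)%N by apply: leq_ltn_trans (leq_pred k) (ltn_ord k).
pose k1 := Ordinal k1_lt; have val_k1 : nat_of_ord k1 = k.-1 by [].
clearbody k1.
have k1k : k1 != k by apply/eqP => /(congr1 val) /=; lia.
have kk1 : k != k1 by rewrite eq_sym.
have mk_gt0 : (0 < m k)%N by lia.
exists (mv m k1 k); split.
- by rewrite /no_x0 mv_other //; apply/eqP => /(congr1 val) /=; lia.
- by rewrite mdeg_mv.
- move=> l l_ge2; have := le_bm l l_ge2.
  have [->|lk1] := eqVneq l k1; first by rewrite mv_src //; lia.
  have [->|lk] := eqVneq l k; first by rewrite mv_tgt //; lia.
  by rewrite mv_other.
- by have := mv_weight (fun k => k.-1) k1k mk_gt0; rewrite /weight /=; lia.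
- exists k1, k; split; first by lia.
  split; first by rewrite mv_src //; lia.
  apply/ffunP => l; rewrite -/(mv _ k k1 l).
  have [->|lk1] := eqVneq l k1; first by rewrite mv_tgt // mv_src // addnK.
  have [->|lk] := eqVneq l k; first by rewrite mv_src // mv_tgt // subnK.
  by rewrite !mv_other.
Qed.

Variables (r : nat) (Bbar : mon n -> Prop).
Hypothesis HB : borel r Bbar.

Definition tail_covered (a : mon n) : Prop := exists b, Bbar b /\ tail_le b a.

Lemma tail_covered_dec_move x y : dec_move x y -> tail_covered y -> tail_covered x.
Proof.
case=> i [j [val_j [xj_gt0 ->]]] [b [Bb le_b]].
have ij : i != j by apply/eqP => E; move: val_j; rewrite E; lia.
have ji : j != i by rewrite eq_sym.
case: (boolP ((2 <= i)%N && (x i < b i)%N)) => [/andP [i_ge2 lt_xb]|not_lt].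
- exists (mv b j i); split.
    by apply: (HB.2 b _ Bb); exists i, j; split; [|split; [lia|]].
  move=> k k_ge2; have := le_b k k_ge2.
  have [->|ki] := eqVneq k i; first by rewrite mv_src // mv_tgt //; lia.
  have [->|kj] := eqVneq k j; first by rewrite mv_src // mv_tgt //; lia.
  by rewrite !mv_other // eq_sym.
- exists b; split => // k k_ge2; have := le_b k k_ge2.
  have [Eki|ki] := eqVneq k i.
    by subst k; rewrite mv_src //; move: not_lt; rewrite k_ge2 /=; lia.
  have [->|kj] := eqVneq k j; first by rewrite mv_tgt //; lia.
  by rewrite !mv_other.
Qed.

Lemma tail_covered_rt b a : clos_refl_trans (mon n) (@dec_move n) b a ->
  tail_covered a -> tail_covered b.
Proof.
elim=> [x y|x|x y z _ IH1 _ IH2]; [exact: tail_covered_dec_move|done|].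
by move=> cov_z; apply/IH1/IH2.
Qed.

Hypothesis Hn : (1 <= n)%N.

Definition ione : 'I_n.+1 := @Ordinal n.+1 1 Hn.

Lemma ord_cases (l : 'I_n.+1) : l = ord0 \/ l = ione \/ (2 <= l)%N.
Proof.
case: l => [[|[|l]] lt_l]; [left | right; left | by right; right]; exact: val_inj.
Qed.

Lemma ione_neq0 : ione != ord0.
Proof. by apply/eqP => /(congr1 val). Qed.

Lemma ge2_neq (k : 'I_n.+1) : (2 <= k)%N -> k != ione /\ k != ord0.
Proof. by move=> k_ge2; split; apply/eqP => E; rewrite E in k_ge2. Qed.

Lemma eq_mon_no_x0 (m b : mon n) : no_x0 m -> no_x0 b -> mdeg m = mdeg b ->
  (forall k : 'I_n.+1, (2 <= k)%N -> m k = b k) -> m = b.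
Proof.
move=> m0 b0 deg_mb eq_tail.
have eq_off1 l : l != ione -> m l = b l.
  by case: (ord_cases l) => [->|[->|/eq_tail //]]; [rewrite m0 b0|rewrite eqxx].
have eq_1 : m ione = b ione.
  move: deg_mb; rewrite /mdeg (bigD1 ione) //= (bigD1 ione (P := xpredT)) //=.
  by rewrite (eq_bigr _ (fun l => eq_off1 l)) => /eqP; rewrite eqn_add2r => /eqP.
by apply/ffunP => l; have [->|/eq_off1] := eqVneq l ione.
Qed.

Lemma descend_from_no_x0 (a : mon n) : exists c, [/\ no_x0 c, mdeg c = mdeg a,
  forall k : 'I_n.+1, (2 <= k)%N -> c k = a k &
  clos_refl_trans (mon n) (@dec_move n) c a].
Proof.
move: {2}(a ord0) (erefl (a ord0)) => t; elim: t a => [|t IH] a a0.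
  by exists a; split => //; apply: rt_refl.
have a0_gt0 : (0 < a ord0)%N by rewrite a0.
have [c [c0 deg_c tail_c path_c]] := IH (mv a ione ord0)
  (ltac:(rewrite mv_tgt ?ione_neq0 // a0; lia)).
exists c; split => //; first by rewrite deg_c mdeg_mv // ione_neq0.
  by move=> k k_ge2; have [? ?] := ge2_neq k_ge2; rewrite tail_c // mv_other.
apply: rt_trans path_c (rt_step _ _ _ _ _).
exists ord0, ione; split => //; split; first by rewrite mv_src ?ione_neq0 //; lia.
have n0 : (ord0 : 'I_n.+1) != ione by rewrite eq_sym ione_neq0.
apply/ffunP => l; rewrite -/(mv _ ord0 ione _).
case: (ord_cases l) => [->|[->|/ge2_neq [? ?]]].
- by rewrite mv_src // mv_tgt ?ione_neq0 // subnK.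
- by rewrite mv_tgt // mv_src ?ione_neq0 // addnK.
- by rewrite !mv_other.
Qed.

Definition tail_mon (b : mon n) : mon n := [ffun k : 'I_n.+1 => if (2 <= k)%N then b k else 0%N].

Lemma mdeg_tail_mon (b : mon n) : no_x0 b -> (mdeg (tail_mon b) + b ione)%N = mdeg b.
Proof.
move=> b0; have eq_off1 l : l != ione -> tail_mon b l = b l.
  by rewrite ffunE; case: (ord_cases l) => [->|[->|->]]; rewrite ?b0 ?eqxx.
rewrite /mdeg (bigD1 ione) //= [in RHS](bigD1 ione) //= (eq_bigr _ (fun l => eq_off1 l)).
by rewrite ffunE /= add0n addnC.
Qed.

Lemma borel_tail_closed b m : Bbar b -> mdeg m = r -> no_x0 m -> tail_le b m -> Bbar m.
Proof.
move=> Bb; have [deg_b b0] := HB.1 b Bb.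
elim: {m}(weight m).+1 {-2}m (ltnSn (weight m)) => [//|N IH] m lt_wm deg_m m0 le_bm.
case: (boolP [exists k : 'I_n.+1, (2 <= k)%N && (b k < m k)%N]).
- case/existsP => k /andP [k_ge2 lt_bm].
  have [m' [m'0 deg_m' le_bm' lt_w inc]] := shift_down_tail k_ge2 lt_bm m0 le_bm.
  apply: (HB.2 m') inc; apply: IH m'0 le_bm'; [lia | by rewrite deg_m'].
- rewrite negb_exists => /forallP not_lt.
  suff -> : m = b by [].
  apply: eq_mon_no_x0; rewrite ?deg_m ?deg_b // => k k_ge2.
  by have := not_lt k; have := le_bm k k_ge2; rewrite k_ge2 /=; lia.
Qed.

End Combinatorics.

Section Saturation.
Variables (K : fieldType) (n : nat) (Hn : (1 <= n)%N) (r : nat)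
  (Bbar : mon n -> Prop) (HB : borel r Bbar).
Local Open Scope ring_scope.

Notation sat := (saturation (mon_ideal K Bbar)).

Definition x1_pow (k : nat) : mon n := [ffun l => if l == ione Hn then k else 0%N].

Lemma irr_pow_x1_pow k : irr_pow K k (monp K (x1_pow k)).
Proof.
have x0_free : no_x0 (x1_pow k) by rewrite /no_x0 ffunE eq_sym (negbTE (ione_neq0 Hn)).
split; first exact: in_sub_monp.
pose one : mon n := [ffun => 0%N].
exists [:: (monp K one, monp K (x1_pow k))]; split.
  constructor => //; split; first by apply: in_sub_monp; rewrite /no_x0 ffunE.
  exists (x1_pow k); split => //.
  rewrite /mdeg (bigD1 (ione Hn)) //= big1 ?ffunE ?eqxx ?addn0 // => l /negbTE.
  by rewrite ffunE => ->.
have one_x1 : mmul one (x1_pow k) = x1_pow k by apply/ffunP => l; rewrite !ffunE.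
by move=> l; rewrite /lin_comb /= mul1r one_x1.
Qed.

(* Every monomial in the support of a saturated element is tail-covered:
   f * x_1^k lies in <Bbar>, so each of its monomials is divisible by some b. *)
Lemma sat_support_tail_covered f m : sat f -> coef f m != 0 -> tail_covered Bbar m.
Proof.
case=> _ [k sat_k] nz_m.
have nz_mk : coef (pmul f (monp K (x1_pow k))) (mmul m (x1_pow k)) != 0.
  by rewrite coef_pmul_monpr.
have [g [m1 [[b [Bb eq_g]] [_ nz_g]]]] :=
  gen_ideal_support (sat_k _ (irr_pow_x1_pow k)) nz_mk.
move: nz_g; rewrite eq_g coef_monp; case: (b =P _) => [eq_b _|]; last by rewrite eqxx.
exists b; split => // l l_ge2.
have [l_ne1 _] := ge2_neq Hn l_ge2.
by rewrite eq_b !ffunE (negbTE l_ne1) addn0 leq_subr.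
Qed.

Lemma ext_tail_covered a : ext_ideal sat (monp K a) -> tail_covered Bbar a.
Proof.
move=> ext_a; have nz_a : coef (monp K a) a != 0 by rewrite coef_monp eqxx oner_neq0.
have [g [m [sat_g [_ nz_g]]]] := gen_ideal_support ext_a nz_a.
have [b [Bb le_b]] := sat_support_tail_covered sat_g nz_g.
by exists b; split => // k k_ge2; apply: leq_trans (le_b k k_ge2) _; rewrite ffunE leq_subr.
Qed.

(* The tail x^b / x_1^(b_1) of a generator b is in the saturation: its
   products with monomials of degree b_1 in x_1..x_n are in Bbar. *)
Lemma tail_mon_in_sat b : Bbar b -> sat (monp K (tail_mon b)).
Proof.
move=> Bb; have [deg_b b0] := HB.1 b Bb.
have tail0 : no_x0 (tail_mon b) by rewrite /no_x0 ffunE.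
split; first exact: in_sub_monp.
exists (b (ione Hn)) => g [sub_g [hs [gen_hs eq_g]]]; split.
  move=> l; rewrite coef_pmul_monpl; case: ifP => _; last by rewrite eqxx.
  by move/sub_g; rewrite /no_x0 !ffunE /=; lia.
exists [seq (h.1, pmul (monp K (tail_mon b)) h.2) | h <- hs]; split.
  apply/List.Forall_forall => h' /List.in_map_iff [h [<- in_h]].
  have [sub_h [u [deg_u [u0 ->]]]] := proj1 (List.Forall_forall _ _) gen_hs h in_h.
  split => //; exists (mmul (tail_mon b) u); split; last exact: pmul_monp.
  apply: (borel_tail_closed HB Hn Bb).
  - by rewrite mdeg_mmul deg_u -deg_b -(mdeg_tail_mon Hn b0).
  - by rewrite /no_x0 ffunE tail0 u0.
  - by move=> k k_ge2; rewrite !ffunE k_ge2 leq_addr.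
by move=> l; rewrite coef_pmul_monpl eq_g -coef_pmul_monpl pmul_monpl_lin.
Qed.

Lemma tail_covered_ext a : tail_covered Bbar a -> ext_ideal sat (monp K a).
Proof.
case=> b [Bb le_b]; apply: (ext_ideal_monp_multiple (tail_mon_in_sat Bb)).
by apply/forallP => k; rewrite ffunE; case: ifP => // /le_b.
Qed.

End Saturation.

Theorem lemma4p1 (K : fieldType) (n r : nat) (Hn : (1 <= n)%N)
    (Bbar : mon n -> Prop) (HB : borel r Bbar) :
  let Nbar := fun a : mon n => inPn1 r a /\ ~ Bbar a in
  let N := fun a : mon n =>
    inPn r a /\ exists b, Nbar b /\ clos_refl_trans (mon n) (@dec_move n) b a in
  forall a : mon n,
    N a <->
    (inPn r a /\
     ~ ext_ideal (saturation (mon_ideal K Bbar)) (monp K a)).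
Proof.
move=> Nbar N a; split.
- (* a comes from b outside Bbar; if x^a were in the ideal, b would be
     tail-covered and hence in Bbar. *)
  case=> deg_a [b [[[deg_b b0] notB_b] path_ba]]; split => // ext_a.
  have [b' [Bb' le_b']] := tail_covered_rt HB path_ba (ext_tail_covered Hn ext_a).
  exact: notB_b (borel_tail_closed HB Hn Bb' deg_b b0 le_b').
- (* pull a back to c without x_0; c in Bbar would put x^a in the ideal. *)
  case=> deg_a not_ext; split => //.
  have [c [c0 deg_c tail_c path_ca]] := descend_from_no_x0 Hn a.
  exists c; split => //; split; first by split => //; rewrite /inPn1 deg_c.
  move=> Bc; apply/not_ext/(tail_covered_ext K Hn HB).
  by exists c; split => // k k_ge2; rewrite tail_c.
Qed.
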